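(* Let $\mathcal I$ be a chore allocation instance with agents $N=\{1,\dots,n\}$, chores $M$, additive valuations with $V_{ij}:=V_i(\{j\})\le0$ and $V_i(M)=-1$, and shares $s_i\in(0,1]$ summing to $1$. Let $\alpha^*$ be the optimal value of the integer program $$\min\ \alpha\quad\text{s.t.}\quad \sum_{j\in M}V_{ij}x_{ij}\ge\alpha\,\mathsf{WMMS}_i\ (\forall i),\ \ \sum_{i\in N}x_{ij}=1\ (\forall j),\ \ x_{ij}\in\{0,1\},\ \ \alpha\ge1.$$ Let $c^*=\min\{c\ge0:\ \mathcal P \text{ with } t_i=w_i=c\,\mathsf{WMMS}_i \text{ for all } i \text{ has a feasible solution}\}$, where $\mathcal P$ is the linear system in variables $x_{ij}$ ($i\in N$, $j\in M_i$), with $M_i=\{j\in M: V_{ij}\ge t_i\}$ and $N_j=\{i: j\in M_i\}$: $$\sum_{j\in M_i}V_{ij}x_{ij}\ge w_i\ (\forall i),\qquad \sum_{i\in N_j}x_{ij}=1\ (\forall j),\qquad x_{ij}\ge0.$$ Then $\alpha^*\ge c^*$.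
   Context: $\mathsf{WMMS}_i:=\max_{\langle Y_1,\dots,Y_n\rangle}\min_{k\in N}V_i(Y_k)\frac{s_i}{s_k}$, the maximum over all ordered partitions of $M$ into $n$ possibly empty bundles. $\alpha^*$ is the optimal WMMS (OWMMS) ratio: the smallest $\alpha\ge1$ for which an allocation with $V_i(X_i)\ge\alpha\,\mathsf{WMMS}_i$ for all $i$ exists. *)

From HB Require Import structures.
From mathcomp Require Import all_boot all_order all_algebra.
From mathcomp Require Import all_classical all_reals.
Set Implicit Arguments. Unset Strict Implicit. Unset Printing Implicit Defensive.
Import Order.TTheory GRing.Theory Num.Theory.
Local Open Scope ring_scope.
Local Open Scope classical_set_scope.

Section Chores.
Variables (R : realType) (N M : finType).
Variables (V : N -> M -> R) (s : N -> R).

(* V_i(Y_k) for the k-th bundle of the ordered partition encoded by sigma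
   (chore j goes to bundle sigma j; bundles may be empty). *)
Definition bundle_val (i : N) (sigma : {ffun M -> N}) (k : N) : R :=
  \sum_(j in M | sigma j == k) V i j.

(* WMMS_i = max over ordered partitions of min_k V_i(Y_k) * s_i / s_k.
   Both max and min are over finite nonempty sets (N nonempty), so sup/inf
   coincide with max/min. *)
Definition WMMS (i : N) : R :=
  sup [set x | exists sigma : {ffun M -> N},
         x = inf [set y | exists k : N, y = bundle_val i sigma k * (s i / s k)]].

Definition IP_feasible (alpha : R) : Prop :=
  exists x : N -> M -> R,
    (forall i j, x i j = 0 \/ x i j = 1) /\
    (forall j, \sum_(i in N) x i j = 1) /\
    (forall i, \sum_(j in M) V i j * x i j >= alpha * WMMS i).

Definition alpha_star : R := inf [set a | 1 <= a /\ IP_feasible a].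

(* the linear system P(t, w); x i j is only meaningful for j in M_i,
   i.e. V i j >= t i; other entries are unused *)
Definition P_feasible (t w : N -> R) : Prop :=
  exists x : N -> M -> R,
    (forall i, \sum_(j in M | V i j >= t i) V i j * x i j >= w i) /\
    (forall j, \sum_(i in N | V i j >= t i) x i j = 1) /\
    (forall i j, V i j >= t i -> 0 <= x i j).

Definition c_star : R :=
  inf [set c | 0 <= c /\
         P_feasible (fun i => c * WMMS i) (fun i => c * WMMS i)].

End Chores.

From HB Require Import structures.
From mathcomp Require Import all_boot all_order all_algebra.
From mathcomp Require Import all_classical all_reals.
From mathcomp Require Import lra.
Set Implicit Arguments.
Unset Strict Implicit.
Unset Printing Implicit Defensive.
Import Order.TTheory GRing.Theory Num.Theory.
Local Open Scope ring_scope.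
Local Open Scope classical_set_scope.

(* An integral allocation [x] achieving [alpha] is itself a solution of P for
   [c = alpha]: values are non-positive, so a chore j given to agent i has
   V_ij >= V_i(X_i) >= alpha WMMS_i, i.e. j lies in M_i. Hence every value
   feasible for the integer program is feasible for P, and c* <= alpha* as soon
   as the integer program is feasible at all. It is: by pigeonhole every
   partition has a bundle worth at most -1/n to agent i, so WMMS_i <= -s_i/n,
   and giving all chores to one agent meets alpha WMMS_i <= -1 for alpha
   large. *)

Lemma exists_le_mean (R : realDomainType) (T : finType) (f : T -> R) (t : T) :
  exists k, f k * #|T|%:R <= \sum_(x in T) f x.
Proof.
have [k _ min_k] := arg_minP f (isT : predT t).
exists k; rewrite mulr_natr -sumr_const; apply: ler_sum => x _; exact: min_k.
Qed.

Lemma inf_fun_le (R : realType) (T : finType) (g : T -> R) (k : T) :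
  inf [set y | exists k, y = g k] <= g k.
Proof.
have [k0 _ min_k0] := arg_minP g (isT : predT k).
apply: ge_inf; last by exists k.
by exists (g k0) => _ [l ->]; exact: min_k0.
Qed.

Lemma inf_le_inf_subset (R : realType) (A B : set R) :
  A `<=` B -> A !=set0 -> has_lbound B -> inf B <= inf A.
Proof.
move=> AB A0 [b lb_b]; apply: lb_le_inf => // a /AB Ba.
by apply: ge_inf => //; exists b.
Qed.

Section Chores.
Variables (R : realType) (N M : finType) (V : N -> M -> R) (s : N -> R).
Hypothesis V_le0 : forall i j, V i j <= 0.
Hypothesis V_sum : forall i, \sum_(j in M) V i j = -1.
Hypothesis s_range : forall i, 0 < s i <= 1.

Let n : R := #|N|%:R.

Lemma sum_bundle_val i sigma :
  \sum_(k in N) bundle_val V i sigma k = \sum_(j in M) V i j.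
Proof. by rewrite (partition_big sigma predT). Qed.

Lemma WMMS_le i : WMMS V s i <= - (s i / n).
Proof.
have n_gt0 : 0 < n by rewrite ltr0n; apply/card_gt0P; exists i.
apply: ge_sup; first by exists (inf [set y | exists k,
  y = bundle_val V i [ffun=> i] k * (s i / s k)]); exists [ffun=> i].
move=> _ [sigma ->]; set b := bundle_val V i sigma.
have [k bk] := exists_le_mean b i.
rewrite sum_bundle_val V_sum -/n in bk.
apply: le_trans (inf_fun_le (fun k => b k * (s i / s k)) k) _ => /=.
have /andP[si_gt0 _] := s_range i; have /andP[sk_gt0 sk_le1] := s_range k.
have si_le : s i <= s i / s k by rewrite ler_pdivlMr //; nra.
have : b k * (s i / s k) * n <= - s i by nra.
by rewrite -mulNr ler_pdivlMr.
Qed.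

Lemma P_feasible_of_integral (w : N -> R) (x : N -> M -> R) :
  (forall i j, x i j = 0 \/ x i j = 1) ->
  (forall j, \sum_(i in N) x i j = 1) ->
  (forall i, w i <= \sum_(j in M) V i j * x i j) ->
  P_feasible V w w.
Proof.
move=> x01 x_col x_row.
have w_le_V i j : x i j = 1 -> w i <= V i j.
  move=> xij; apply: le_trans (x_row i) _; rewrite (bigD1 j) //= xij mulr1.
  suff : \sum_(k in M | k != j) V i k * x i k <= 0 by lra.
  by apply: sumr_le0 => k _; case: (x01 i k) => ->; rewrite ?mulr0 ?mulr1.
have x_out i j : ~~ (w i <= V i j) -> x i j = 0.
  by move=> /negP wV; case: (x01 i j) => // /w_le_V.
exists x; split; last split.
- move=> i; apply: le_trans (x_row i) _; rewrite big_mkcondr /=.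
  by apply: ler_sum => j _; case: ifP => // /negbT /x_out ->; rewrite mulr0.
- move=> j; rewrite -(x_col j) big_mkcondr /=.
  by apply: eq_bigr => i _; case: ifP => // /negbT /x_out.
- by move=> i j _; case: (x01 i j) => ->.
Qed.

Lemma IP_feasible_single_agent (i0 : N) alpha :
  (forall i, alpha * WMMS V s i <= -1) -> IP_feasible V s alpha.
Proof.
move=> alpha_W; exists (fun i j => (i == i0)%:R); split; last split.
- by move=> i j; case: (i == i0); [right|left].
- by move=> j; rewrite (bigD1 i0) //= eqxx big1 ?addr0 // => i /negbTE ->.
- move=> i; apply: le_trans (alpha_W i) _; rewrite -(V_sum i).
  by apply: ler_sum => j _; case: (i == i0); rewrite ?mulr1 ?mulr0.
Qed.

Lemma IP_feasible_nonempty (i0 : N) :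
  [set a | 1 <= a /\ IP_feasible V s a] !=set0.
Proof.
have n_ge1 : 1 <= n by rewrite ler1n; apply/card_gt0P; exists i0.
have inv_ge i : n <= n / s i.
  by have /andP[si_gt0 si_le1] := s_range i; rewrite ler_pdivlMr //; nra.
set alpha := \sum_(i in N) n / s i.
have alpha_ge i : n / s i <= alpha.
  rewrite /alpha (bigD1 i) //= lerDl; apply: sumr_ge0 => k _.
  by apply: le_trans (inv_ge k); lra.
exists alpha; split; first exact: le_trans n_ge1 (le_trans (inv_ge i0) _).
apply: (IP_feasible_single_agent i0) => i.
have /andP[si_gt0 _] := s_range i.
have n_gt0 : 0 < n by lra.
have q_gt0 : 0 < s i / n by exact: divr_gt0.
have pq1 : n / s i * (s i / n) = 1.
  by rewrite mulrA divfK ?gt_eqF // divff ?gt_eqF.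
have alpha_ge0 : 0 <= alpha by apply: le_trans (alpha_ge i); apply: divr_ge0; lra.
apply: le_trans (ler_wpM2l alpha_ge0 (WMMS_le i)) _.
by rewrite mulrN lerN2 -pq1 ler_wpM2r // ?ltW.
Qed.

End Chores.

Theorem lemma6 (R : realType) (N M : finType) (V : N -> M -> R) (s : N -> R)
  (hV : forall i j, V i j <= 0)
  (hVM : forall i, \sum_(j in M) V i j = -1)
  (hs : forall i, 0 < s i <= 1)
  (hs1 : \sum_(i in N) s i = 1) :
  c_star V s <= alpha_star V s.
Proof.
have [i0 _] : exists i0 : N, true.
  case: (pickP (@predT N)) => [i0 _|N0]; first by exists i0.
  by move: hs1; rewrite big_pred0 // => /esym/eqP; rewrite oner_eq0.
rewrite /c_star /alpha_star; apply: inf_le_inf_subset.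
- move=> a [a_ge1 [x [x01 [x_col x_row]]]]; split; first lra.
  exact: P_feasible_of_integral x01 x_col x_row.
- exact: IP_feasible_nonempty.
- by exists 0 => c [].
Qed.
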